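(* Let $R$ be a finite local commutative ring, $K\le R^\times$, $\mathcal C=\mathrm{Cyc}(K,R)$ and $\mathcal A=\mathcal A(K,R)$ its multiplication S-ring; let $u=0$, $v=1$. If the S-ring $\mathcal A$ is trivial, then the scheme $\mathcal C_{u,v}$ is trivial. In particular, in this case $\mathrm{Aut}(\mathcal C)=\Gamma(K,R)$.
   Context: All rings have an identity. A scheme on a finite set $V$ is a pair $(V,\mathcal R)$, $\mathcal R$ a partition of $V\times V$ into nonempty basis relations, closed under transposition, with the diagonal a union of basis relations and with the intersection numbers $|\{y:(x,y)\in R_1,(y,z)\in R_2\}|$ depending only on the basis relation containing $(x,z)$; relations are unions of basis relations. A scheme is trivial if every subset of $V\times V$ is a relation (all basis relations are singletons). $\mathrm{Aut}$ is the group of permutations fixing every basis relation; $\mathrm{Iso}$ the group of permutations permuting them. $[\mathcal C,\mathcal M]$ is the smallest scheme having all relations of $\mathcal C$ and of the set $\mathcal M$ as relations; $\mathcal C_w=[\mathcal C,\{(w,w)\}]$, $\mathcal C_{u,v}=[\mathcal C,\{(u,u)\},\{(v,v)\}]$. If $\Delta(U)$ is a relation, $\mathcal C_U$ is the scheme on $U$ with basis relations the nonempty $S\cap U^2$. For $\Gamma\le\mathrm{Iso}(\mathcal C)$, $\mathcal C^\Gamma$ is the scheme whose relations are the $\Gamma$-invariant relations of $\mathcal C$. $\mathrm{Cyc}(K,R)$ is the scheme on $R$ with basis relations $\{(x,y): y-x\in rK\}$, $r\in R$. With $u=0$, $\mathcal C'=((\mathcal C_u)_{R^\times})^{R^\times_{right}}$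 where $R^\times_{right}=\{x\mapsto xa:a\in R^\times\}$; its basis relations are $\{(g,xg):g\in R^\times,x\in X\}$ for sets $X$ partitioning $R^\times$. The multiplication S-ring $\mathcal A(K,R)$ is the S-ring over $R^\times$ with these basic sets $X$; it is trivial if all basic sets are singletons. $\Gamma(K,R)$ is the group of permutations $x\mapsto ax+b$, $a\in K$, $b\in R$. *)

From mathcomp Require Import all_boot all_order all_algebra all_fingroup.
Set Implicit Arguments. Unset Strict Implicit. Unset Printing Implicit Defensive.
Import GRing.Theory.
Local Open Scope ring_scope.

Section Schemes.
Variable V : finType.

Definition transp (s : {set V * V}) : {set V * V} := [set p | (p.2, p.1) \in s].
Definition diagV : {set V * V} := [set p | p.1 == p.2].

Definition is_rel (S : {set {set V * V}}) (T : {set V * V}) : Prop :=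
  exists2 Q : {set {set V * V}}, Q \subset S & T = cover Q.

Definition is_scheme (S : {set {set V * V}}) : Prop :=
  [/\ partition S [set: V * V],
      forall s, s \in S -> transp s \in S,
      is_rel S diagV &
      forall r1 r2 s, r1 \in S -> r2 \in S -> s \in S ->
        forall x z x' z', (x, z) \in s -> (x', z') \in s ->
          #|[set y | ((x, y) \in r1) && ((y, z) \in r2)]| =
          #|[set y | ((x', y) \in r1) && ((y, z') \in r2)]| ].

(* relations of [C, M]: the smallest scheme whose relations contain those of the
   scheme C (basis Cb) and the sets in M. *)
Definition gen_rel (Cb : {set {set V * V}}) (M : {set {set V * V}}) (T : {set V * V}) : Prop :=
  forall S, is_scheme S ->
    (forall T', is_rel Cb T' -> is_rel S T') ->
    (forall T', T' \in M -> is_rel S T') ->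
    is_rel S T.

Definition gen_trivial (Cb : {set {set V * V}}) (M : {set {set V * V}}) : Prop :=
  forall T : {set V * V}, gen_rel Cb M T.

Definition basis_of (isR : {set V * V} -> Prop) (B : {set V * V}) : Prop :=
  [/\ isR B, B != set0 &
      forall T, isR T -> T \subset B -> T = set0 \/ T = B].

Definition in_Aut (Cb : {set {set V * V}}) (g : {perm V}) : Prop :=
  forall B, B \in Cb -> [set (g p.1, g p.2) | p in B] = B.

End Schemes.

Section Local.
Variable R : finComUnitRingType.

Definition is_ideal (I : {set R}) : Prop :=
  [/\ (0 : R) \in I,
      forall x y, x \in I -> y \in I -> x + y \in I,
      forall x, x \in I -> - x \in I &
      forall r x, x \in I -> r * x \in I].

Definition is_maximal_ideal (I : {set R}) : Prop :=
  [/\ is_ideal I, (1 : R) \notin I &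
      forall J, is_ideal J -> (1 : R) \notin J -> I \subset J -> J = I].

Definition local_ring : Prop :=
  exists I, is_maximal_ideal I /\ forall J, is_maximal_ideal J -> J = I.

Variable K : {group {unit R}}.

Definition unitsR : {set R} := [set x : R | x \is a GRing.unit].

Definition rK (r : R) : {set R} := [set r * val k | k in K].

Definition cyc_rel (r : R) : {set R * R} := [set p | p.2 - p.1 \in rK r].
Definition Cyc_basis : {set {set R * R}} := [set cyc_rel r | r : R].

Definition Cu_rel : {set R * R} -> Prop :=
  gen_rel Cyc_basis [set [set ((0 : R), (0 : R))]].

Definition CuU_basis (B : {set R * R}) : Prop :=
  exists2 S, basis_of Cu_rel S & B = S :&: setX unitsR unitsR /\ B != set0.

Definition CuU_rel (T : {set R * R}) : Prop :=
  exists2 Q : {set {set R * R}}, (forall B, B \in Q -> CuU_basis B) & T = cover Q.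

(* C' = ((C_u)_{R^x})^{R^x_right}: the R^x_right-invariant relations *)
Definition Cprime_rel (T : {set R * R}) : Prop :=
  CuU_rel T /\
  forall a, a \in unitsR -> [set (p.1 * a, p.2 * a) | p in T] = T.

(* A(K,R) trivial: every basic set X is a singleton, i.e. every basis relation
   {(g, x g) : g in R^x, x in X} of C' has X = {x} *)
Definition mult_sring_trivial : Prop :=
  forall B, basis_of Cprime_rel B ->
    exists2 x, x \in unitsR & B = [set (g, x * g) | g in unitsR].

Definition in_Gamma (g : {perm R}) : Prop :=
  exists2 a : {unit R}, a \in K & exists b : R, forall x, g x = val a * x + b.

End Local.

(* If A(K,R) is trivial, the graph {(g, x g) : g unit} of multiplication by a
   unit x is a basis relation of C', hence a relation of every scheme whose
   relations contain those of C_0; composing it with {(1,1)} isolates {(x,x)}.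
   For a nonunit y, 1 - y is a unit because R is local, and the isomorphism
   x |-> 1 - x of Cyc(K,R), which swaps 0 and 1, transports the argument to y.
   Once every {(x,x)} is a relation, every set of pairs is one, so C_{0,1} is
   trivial.  An automorphism g maps (0,1) into the basis relation of 1, so
   a := g 1 - g 0 lies in K, and g followed by the inverse of x |-> a x + g 0
   fixes 0 and 1; the scheme of 2-orbits of the cyclic group it generates
   then has all relations of C_{0,1}, so it is discrete and this composite is
   the identity. *)

From Pilot Require Import Defs.
From mathcomp Require Import all_boot all_order all_algebra all_fingroup.
From mathcomp Require Import boolp ring.
Set Implicit Arguments. Unset Strict Implicit. Unset Printing Implicit Defensive.
Import GRing.Theory.

Section SchemeRelations.
Variable V : finType.
Implicit Types (S : {set {set V * V}}) (T : {set V * V}).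

Definition block_closed S T :=
  forall s, s \in S -> forall p q, p \in s -> q \in s -> p \in T -> q \in T.

Lemma is_relP S T : partition S [set: V * V] -> is_rel S T <-> block_closed S T.
Proof.
move=> /and3P[/eqP coverS trivS _]; split.
  move=> [Q /subsetP sQS ->] s sS p q ps qs /bigcupP[s' s'Q ps'].
  have ss' : s = s' by rewrite -(def_pblock trivS sS ps) (def_pblock trivS (sQS _ s'Q) ps').
  by apply/bigcupP; exists s' => //; rewrite -ss'.
move=> closedT; exists [set s in S | s \subset T].
  by apply/subsetP=> s; rewrite inE => /andP[].
apply/setP=> p; apply/idP/bigcupP => [pT | [s]]; last first.
  by rewrite inE => /andP[_ /subsetP]; apply.
have pS : pblock S p \in S by rewrite pblock_mem ?coverS.
exists (pblock S p); last by rewrite mem_pblock coverS.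
rewrite inE pS; apply/subsetP=> q qp.
by apply: (closedT _ pS p) => //; rewrite mem_pblock coverS.
Qed.

Definition rcomp T1 T2 : {set V * V} :=
  [set p | [exists y, ((p.1, y) \in T1) && ((y, p.2) \in T2)]].

Section Scheme.
Variable S : {set {set V * V}}.
Hypothesis schemeS : is_scheme S.

Let partS : partition S [set: V * V]. Proof. by case: schemeS. Qed.

Lemma is_rel_rcomp T1 T2 : is_rel S T1 -> is_rel S T2 -> is_rel S (rcomp T1 T2).
Proof.
move=> /(is_relP _ partS) cl1 /(is_relP _ partS) cl2.
apply/(is_relP _ partS) => s sS [x z] [x' z'] xzs xzs'.
rewrite !inE /= => /existsP[y /andP[xy yz]].
have [/eqP coverS _ _] := and3P partS.
have block_mem (p : V * V) : pblock S p \in S /\ p \in pblock S p.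
  by rewrite pblock_mem ?mem_pblock coverS.
have [r1S xyr1] := block_mem (x, y); have [r2S yzr2] := block_mem (y, z).
case: schemeS => _ _ _ /(_ _ _ _ r1S r2S sS x z x' z' xzs xzs') ncommon.
have : 0 < #|[set y0 | ((x, y0) \in pblock S (x, y)) && ((y0, z) \in pblock S (y, z))]|.
  by apply/card_gt0P; exists y; rewrite inE xyr1 yzr2.
rewrite ncommon => /card_gt0P[y' ]; rewrite inE => /andP[xy' yz'].
apply/existsP; exists y'.
by rewrite (cl1 _ r1S _ _ xyr1 xy' xy) (cl2 _ r2S _ _ yzr2 yz' yz).
Qed.

Lemma is_rel_transp T : is_rel S T -> is_rel S (transp T).
Proof.
move=> /(is_relP _ partS) clT; apply/(is_relP _ partS) => s sS p q ps qs.
case: schemeS => _ /(_ s sS) tS _ _; rewrite !inE.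
by apply: (clT _ tS); rewrite inE -surjective_pairing.
Qed.

Lemma is_rel_cover (Q : {set {set V * V}}) :
  (forall T, T \in Q -> is_rel S T) -> is_rel S (cover Q).
Proof.
move=> relQ; apply/(is_relP _ partS) => s sS p q ps qs /bigcupP[T TQ pT].
have /(is_relP _ partS) clT := relQ T TQ.
by apply/bigcupP; exists T; last exact: (clT s sS p).
Qed.

Lemma is_rel_setD T1 T2 : is_rel S T1 -> is_rel S T2 -> is_rel S (T1 :\: T2).
Proof.
move=> /(is_relP _ partS) cl1 /(is_relP _ partS) cl2.
apply/(is_relP _ partS) => s sS p q ps qs; rewrite !inE => /andP[pT2 pT1].
rewrite (cl1 _ sS _ _ ps qs pT1) andbT.
by apply: contra pT2; apply: cl2 sS _ _ qs ps.
Qed.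

Lemma is_rel_setT : is_rel S [set: V * V].
Proof. by apply/(is_relP _ partS) => s _ p q _ _ _; rewrite inE. Qed.

Lemma is_rel_setI T1 T2 : is_rel S T1 -> is_rel S T2 -> is_rel S (T1 :&: T2).
Proof.
move=> rel1 rel2; have -> : T1 :&: T2 = T1 :\: (T1 :\: T2) by rewrite setDDr setDv set0U.
by apply: is_rel_setD => //; apply: is_rel_setD.
Qed.

(* If the row of [P] at [a] is [{c}], then [{(c,c)}] is [P^T {(a,a)} P]. *)
Lemma is_rel_set1_transfer a c P :
  is_rel S [set (a, a)] -> is_rel S P -> (forall b, ((a, b) \in P) = (b == c)) ->
  is_rel S [set (c, c)].
Proof.
move=> rel_a relP rowP.
have -> : [set (c, c)] = rcomp (rcomp (transp P) [set (a, a)]) P.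
  apply/setP=> [[x y]]; rewrite !inE /=; apply/idP/existsP.
    case/eqP=> -> ->; exists a; rewrite rowP eqxx andbT inE.
    by apply/existsP; exists a; rewrite !inE /= rowP !eqxx.
  case=> z /andP[]; rewrite inE => /existsP[w /andP[]].
  rewrite !inE /= => xw /eqP[wa za]; rewrite za rowP => /eqP ->.
  by move: xw; rewrite wa rowP => /eqP ->.
by apply: is_rel_rcomp => //; apply: is_rel_rcomp => //; apply: is_rel_transp.
Qed.

Lemma is_rel_discrete : (forall x, is_rel S [set (x, x)]) -> forall T, is_rel S T.
Proof.
move=> rel_diag T; apply/(is_relP _ partS) => s sS p q ps qs pT.
suff /(is_relP _ partS)/(_ s sS p q ps qs) : is_rel S [set p].
  by rewrite !inE eqxx => /(_ isT) /eqP ->.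
have -> : [set p] = rcomp (rcomp [set (p.1, p.1)] [set: V * V]) [set (p.2, p.2)].
  apply/setP=> -[x y]; rewrite !inE; apply/eqP/existsP => [->|[z]].
    by exists p.2; rewrite !inE eqxx andbT; apply/existsP; exists p.1; rewrite !inE eqxx.
  rewrite !inE /= => /andP[/existsP[w]]; rewrite !inE /= => /andP[/eqP[-> _] _] /eqP[_ ->].
  by rewrite -surjective_pairing.
by apply: is_rel_rcomp => //; apply: is_rel_rcomp => //; apply: is_rel_setT.
Qed.

End Scheme.

Lemma gen_rel_setD Cb M T1 T2 :
  gen_rel Cb M T1 -> gen_rel Cb M T2 -> gen_rel Cb M (T1 :\: T2).
Proof. by move=> rel1 rel2 S schemeS *; apply: is_rel_setD; [|apply: rel1|apply: rel2]. Qed.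

Lemma gen_rel_setI Cb M T1 T2 :
  gen_rel Cb M T1 -> gen_rel Cb M T2 -> gen_rel Cb M (T1 :&: T2).
Proof. by move=> rel1 rel2 S schemeS *; apply: is_rel_setI; [|apply: rel1|apply: rel2]. Qed.

Lemma gen_rel_setT Cb M : gen_rel Cb M [set: V * V].
Proof. by move=> S schemeS *; apply: is_rel_setT. Qed.

(* [basis_of] alone would refer to the vector-space notion of vector.v. *)
Section BasisOf.
Variable P : {set V * V} -> Prop.

Lemma basis_of_exists X p :
  (forall B T : {set V * V}, P B -> P T -> T \subset B -> P (B :\: T)) ->
  P X -> p \in X -> exists2 B, Defs.basis_of P B & p \in B.
Proof.
move=> closedD PX pX.
have [B /minsetP[/asboolP[PB pB] minB] _] :=
  @minset_exists _ (fun A => `[< P A /\ p \in A >]) X (asboolT (conj PX pX)).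
exists B => //; split=> //; first by apply/set0Pn; exists p.
move=> T PT sTB; have [pT | pT] := boolP (p \in T).
  by right; apply: minB; [apply/asboolP | ].
have BTB : B :\: T = B.
  by apply: minB (subsetDl _ _); apply/asboolP; rewrite inE pT pB; split => //; apply: closedD.
left; apply/setP=> x; rewrite inE; apply/negbTE/negP=> xT.
by have := subsetP sTB x xT; rewrite -BTB inE xT.
Qed.

Lemma basis_of_eq B1 B2 p :
  (forall T1 T2, P T1 -> P T2 -> P (T1 :&: T2)) ->
  Defs.basis_of P B1 -> Defs.basis_of P B2 -> p \in B1 -> p \in B2 -> B1 = B2.
Proof.
move=> closedI [P1 _ min1] [P2 _ min2] pB1 pB2.
have PB12 := closedI _ _ P1 P2.
have n0 : B1 :&: B2 != set0 by apply/set0Pn; exists p; rewrite inE pB1.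
have [e1|<-] := min1 _ PB12 (subsetIl _ _); first by rewrite e1 eqxx in n0.
by case: (min2 _ PB12 (subsetIr _ _)) => // e2; rewrite e2 eqxx in n0.
Qed.

End BasisOf.
End SchemeRelations.

Section PairAction.
Local Open Scope group_scope.
Variable V : finType.
Implicit Types (S : {set {set V * V}}) (T : {set V * V}) (g : {perm V}).

Definition pair_act (p : V * V) g : V * V := (g p.1, g p.2).

Lemma pair_act1 : pair_act^~ 1 =1 id.
Proof. by case=> x y; rewrite /pair_act !perm1. Qed.

Lemma pair_actM p g h : pair_act p (g * h) = pair_act (pair_act p g) h.
Proof. by rewrite /pair_act !permM. Qed.

Canonical pair_action := TotalAction pair_act1 pair_actM.

Lemma pair_actE p g : pair_action p g = (g p.1, g p.2).
Proof. by []. Qed.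

Lemma in_AutP Cb g :
  in_Aut Cb g <-> (forall B, B \in Cb -> g \in 'N(B | pair_action)).
Proof.
split=> autg B /autg; rewrite -astab1_set; first by move=> gB; apply/astab1P.
by move/astab1P.
Qed.

Lemma mem_setact_pair T g p : (p \in pair_action^* T g) = (pair_act p g^-1 \in T).
Proof. by rewrite -{1}[g]invgK setactVin ?inE. Qed.

Lemma is_rel_setact S T g :
  is_rel S T -> is_rel ((pair_action^*)^* S g) (pair_action^* T g).
Proof.
case=> Q sQS ->; exists ((pair_action^*)^* Q g); first exact: imsetS.
by rewrite setactE imset_cover cover_imset.
Qed.

Lemma is_rel_setactE S T g :
  is_rel ((pair_action^*)^* S g) (pair_action^* T g) <-> is_rel S T.
Proof.
split=> [/(is_rel_setact g^-1)|]; last exact: is_rel_setact.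
by rewrite !actK.
Qed.

Lemma is_scheme_setact S g : is_scheme S -> is_scheme ((pair_action^*)^* S g).
Proof.
case=> partS transpS diagS intS; split.
- have imT : [set pair_act p g | p in [set: V * V]] = [set: V * V].
    by apply/setP=> p; rewrite inE -[p](actKV pair_action g); apply: imset_f; rewrite inE.
  by rewrite -imT (imset_partition _ _ (act_inj pair_action g)).
- move=> _ /imsetP[s sS ->]; apply/imsetP; exists (transp s); first exact: transpS.
  by apply/setP=> p; rewrite !(inE, mem_setact_pair).
- have -> : diagV V = pair_action^* (diagV V) g.
    by apply/setP=> p; rewrite mem_setact_pair !inE (inj_eq perm_inj).
  exact: is_rel_setact.
- move=> _ _ _ /imsetP[r1 r1S ->] /imsetP[r2 r2S ->] /imsetP[s sS ->] x z x' z'.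
  rewrite !mem_setact_pair => xzs xzs'.
  have countE a b :
      #|[set y | ((a, y) \in pair_action^* r1 g) && ((y, b) \in pair_action^* r2 g)]| =
      #|[set y | ((g^-1 a, y) \in r1) && ((y, g^-1 b) \in r2)]|.
    rewrite -[RHS](card_preimset _ (@perm_inj _ g^-1)).
    by apply: eq_card => y; rewrite !inE !mem_setact_pair.
  by rewrite !countE (intS _ _ _ r1S r2S sS _ _ _ _ xzs xzs').
Qed.

Section OrbitScheme.
Variable H : {group {perm V}}.

Definition orbit_scheme : {set {set V * V}} := orbit pair_action H @: [set: V * V].

Lemma orbit_scheme_partition : partition orbit_scheme [set: V * V].
Proof. by apply: orbit_partition; apply/actsP=> g _ p; rewrite !inE. Qed.

Lemma is_rel_orbit_scheme T : H \subset 'N(T | pair_action) -> is_rel orbit_scheme T.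
Proof.
move=> /subsetP nTH; apply/(is_relP _ orbit_scheme_partition).
move=> _ /imsetP[u _ ->] p q pu qu pT.
have /orbitP[g gH <-] : q \in orbit pair_action H p by move/orbit_eqP: pu => ->.
by rewrite (astabs_act _ (nTH g gH)).
Qed.

Lemma orbit_scheme_is_scheme : is_scheme orbit_scheme.
Proof.
split; first exact: orbit_scheme_partition.
- move=> _ /imsetP[p _ ->]; apply/imsetP; exists (p.2, p.1) => //.
  apply/setP=> -[a b]; rewrite inE; apply/orbitP/orbitP => -[g gH [<- <-]]; by exists g.
- apply: is_rel_orbit_scheme; apply/subsetP=> g _; apply/astabsP=> p.
  by rewrite !inE (inj_eq perm_inj).
- move=> r1 r2 _ r1S r2S /imsetP[u _ ->] x z x' z' xzu xzu'.
  have /orbitP[g gH [<- <-]] : (x', z') \in orbit pair_action H (x, z).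
    by move/orbit_eqP: xzu => ->.
  have invH r a b : r \in orbit_scheme -> ((g a, g b) \in r) = ((a, b) \in r).
    by case/imsetP=> w _ ->; rewrite -[(g a, g b)]/(pair_action (a, b) g) orbit_actr.
  rewrite -[RHS](card_preimset _ (@perm_inj _ g)).
  by apply: eq_card => y; rewrite !inE !invH.
Qed.

End OrbitScheme.

Lemma gen_trivial_Aut1 Cb M g : gen_trivial Cb M -> in_Aut Cb g -> in_Aut M g -> g = 1.
Proof.
move=> trivCM /in_AutP autCb /in_AutP autM.
have relg T : g \in 'N(T | pair_action) -> is_rel (orbit_scheme <[g]>) T.
  by move=> nTg; apply: is_rel_orbit_scheme; rewrite cycle_subG.
apply/permP=> x; rewrite perm1.
have /(is_relP _ (orbit_scheme_partition _)) closed_x :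
    is_rel (orbit_scheme <[g]>) [set (x, x)].
  apply: trivCM; first exact: orbit_scheme_is_scheme.
    move=> _ [Q /subsetP sQCb ->]; apply: is_rel_cover; first exact: orbit_scheme_is_scheme.
    by move=> B /sQCb /autCb; exact: relg.
  by move=> T /autM; exact: relg.
have xx_orbit := imset_f (orbit pair_action <[g]>) (in_setT (x, x)).
have := closed_x _ xx_orbit _ _ (orbit_refl _ _ _) (mem_orbit _ _ (cycle_id g)) (set11 _).
by rewrite inE => /eqP[].
Qed.

End PairAction.

Arguments pair_action {V}.

Section LocalRing.
Local Open Scope ring_scope.
Variable R : finComUnitRingType.

Lemma is_ideal_principal (z : R) : is_ideal [set r * z | r : R].
Proof.
split.
- by apply/imsetP; exists 0; rewrite ?mul0r.
- by move=> _ _ /imsetP[r _ ->] /imsetP[s _ ->]; apply/imsetP; exists (r + s); rewrite ?mulrDl.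
- by move=> _ /imsetP[r _ ->]; apply/imsetP; exists (- r); rewrite ?mulNr.
- by move=> t _ /imsetP[r _ ->]; apply/imsetP; exists (t * r); rewrite ?mulrA.
Qed.

Lemma ideal_sub_maximal (J : {set R}) :
  is_ideal J -> 1 \notin J -> exists2 M, is_maximal_ideal M & J \subset M.
Proof.
move=> idJ J1.
have [M /maxsetP[/asboolP[idM M1] maxM] sJM] :=
  @maxset_exists _ (fun A => `[< is_ideal A /\ 1 \notin A >]) J (asboolT (conj idJ J1)).
by exists M => //; split => // N idN N1 sMN; apply: maxM sMN; apply/asboolP.
Qed.

Lemma local_ring_subr_unit (y : R) :
  local_ring R -> y \isn't a GRing.unit -> 1 - y \is a GRing.unit.
Proof.
case=> I [maxI uniqI] yNU; apply: contraT => y1NU.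
have nonunit_memI z : z \isn't a GRing.unit -> z \in I.
  move=> zNU; have [|M maxM sM] := ideal_sub_maximal (is_ideal_principal z).
    by apply/imsetP=> -[r _ rz]; case/negP: zNU; apply/unitrPr; exists r; rewrite mulrC.
  by rewrite -(uniqI M maxM); apply: (subsetP sM); apply/imsetP; exists 1; rewrite ?mul1r.
case: maxI => [[_ addI _ _] I1 _]; case/negP: I1.
by rewrite -(subrK y 1); apply: addI; apply: nonunit_memI.
Qed.

End LocalRing.

Section CycScheme.
Local Open Scope ring_scope.
Variables (R : finComUnitRingType) (K : {group {unit R}}).
Implicit Types (b r x y : R) (a k : {unit R}) (T : {set R * R}).

Lemma mem_unitsR x : (x \in unitsR R) = (x \is a GRing.unit).
Proof. by rewrite inE. Qed.

Lemma mem_cyc_rel r p : (p \in cyc_rel K r) = (p.2 - p.1 \in rK K r).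
Proof. by rewrite inE. Qed.

Lemma rK_self r : r \in rK K r.
Proof. by apply/imsetP; exists 1%g; rewrite ?group1 // FinRing.val_unit1 mulr1. Qed.

Lemma rK_mull a r x : (val a * x \in rK K (val a * r)) = (x \in rK K r).
Proof.
have -> : rK K (val a * r) = [set val a * y | y in rK K r].
  by rewrite -imset_comp; apply: eq_imset => k /=; rewrite mulrA.
exact/mem_imset/mulrI/valP.
Qed.

Lemma rK_mulK k r : k \in K -> rK K (val k * r) = rK K r.
Proof.
move=> kK; apply/setP=> x; apply/imsetP/imsetP => -[k' k'K ->].
  by exists (k * k')%g; rewrite ?groupM // FinRing.val_unitM mulrCA mulrA.
exists (k^-1 * k')%g; first by rewrite groupM ?groupV.
by rewrite FinRing.val_unitM FinRing.val_unitV mulrCA mulrA mulKr //; apply: valP.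
Qed.

Lemma affine_inj a (b : R) : injective (fun x => val a * x + b).
Proof. by move=> x y /addIr /mulrI; apply; apply: valP. Qed.

Definition affine a (b : R) : {perm R} := perm (@affine_inj a b).

Lemma affineE a b x : affine a b x = val a * x + b.
Proof. by rewrite permE. Qed.

Lemma setact_cyc_rel a b r :
  setact pair_action (cyc_rel K r) (affine a b) = cyc_rel K (val a * r).
Proof.
have aU := valP a; apply/setP=> q; apply/imsetP/idP => [[p pr ->]|qar].
  rewrite mem_cyc_rel /= !affineE.
  have -> : val a * p.2 + b - (val a * p.1 + b) = val a * (p.2 - p.1) by ring.
  by rewrite rK_mull -mem_cyc_rel.
exists ((val a)^-1 * (q.1 - b), (val a)^-1 * (q.2 - b)).
  rewrite mem_cyc_rel /=.
  have -> : (val a)^-1 * (q.2 - b) - (val a)^-1 * (q.1 - b) = (val a)^-1 * (q.2 - q.1) by ring.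
  by rewrite -[r in rK K r](mulKr aU) -FinRing.val_unitV rK_mull -mem_cyc_rel.
by rewrite pair_actE /= !affineE !mulVKr // !subrK -surjective_pairing.
Qed.

Lemma Cyc_basis_setact a b :
  setact (set_action pair_action) (Cyc_basis K) (affine a b) = Cyc_basis K.
Proof.
have aU := valP a; rewrite setactE /Cyc_basis -imset_comp; apply/setP=> s.
apply/imsetP/imsetP => -[r _ ->] /=; rewrite ?setact_cyc_rel; first by exists (val a * r).
by exists ((val a)^-1 * r); rewrite //= setact_cyc_rel mulVKr.
Qed.

Lemma affine_in_Aut a b : a \in K -> in_Aut (Cyc_basis K) (affine a b).
Proof.
move=> aK _ /imsetP[r _ ->].
by rewrite -[LHS]/(setact pair_action _ _) setact_cyc_rel /cyc_rel rK_mulK.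
Qed.

Lemma is_rel_cyc_setact a b T :
  is_rel (Cyc_basis K) T -> is_rel (Cyc_basis K) (setact pair_action T (affine a b)).
Proof. by move=> /(is_rel_setact (affine a b)); rewrite Cyc_basis_setact. Qed.

Notation units2 := (setX (unitsR R) (unitsR R)).

Lemma Cu_rel_units2 : Cu_rel K units2.
Proof.
move=> S schemeS relCyc relM.
have rel00 : is_rel S [set (0, 0)] by apply: relM; rewrite inE.
pose W := cover [set cyc_rel K r | r in unitsR R].
have memW c d : ((c, d) \in W) = (d - c \in unitsR R).
  apply/bigcupP/idP => [[_ /imsetP[r rU ->]]|dcU]; last first.
    by exists (cyc_rel K (d - c)); [apply: imset_f | rewrite mem_cyc_rel rK_self].
  rewrite mem_cyc_rel /= => /imsetP[k _ ->].
  by rewrite mem_unitsR unitrM -mem_unitsR rU; apply: valP.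
have relW : is_rel S W.
  apply: relCyc; exists [set cyc_rel K r | r in unitsR R] => //.
  by apply/subsetP=> _ /imsetP[r _ ->]; apply: imset_f.
pose W0 := rcomp [set (0, 0)] W.
have memW0 c d : ((c, d) \in W0) = (c == 0) && (d \in unitsR R).
  rewrite inE; apply/existsP/andP => [[e]|[/eqP-> dU]]; last first.
    by exists 0; rewrite !inE eqxx memW subr0.
  by rewrite /= !inE xpair_eqE memW => /andP[/andP[/eqP-> /eqP->]]; rewrite subr0 -mem_unitsR.
have -> : units2 = rcomp (transp W0) W0.
  apply/setP=> -[c d]; rewrite !inE /=; apply/andP/existsP => [[cU dU]|[e]].
    by exists 0; rewrite inE /= !memW0 eqxx !mem_unitsR cU dU.
  by rewrite inE /= !memW0 !mem_unitsR => /andP[/andP[_ ->] /andP[_ ->]].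
have relW0 : is_rel S W0 by apply: is_rel_rcomp.
by apply: is_rel_rcomp => //; apply: is_rel_transp.
Qed.

Lemma CuU_basis_sub B : CuU_basis K B -> B \subset units2.
Proof. by case=> S1 _ [-> _]; apply: subsetIr. Qed.

Lemma CuU_basis_eq B1 B2 p :
  CuU_basis K B1 -> CuU_basis K B2 -> p \in B1 -> p \in B2 -> B1 = B2.
Proof.
case=> S1 basis1 [-> _] [S2 basis2 [-> _]]; rewrite !inE => /andP[pS1 _] /andP[pS2 _].
by rewrite (basis_of_eq (@gen_rel_setI _ _ _) basis1 basis2 pS1 pS2).
Qed.

Lemma imset_mulr_pair x T : x \is a GRing.unit ->
  [set (p.1 * x, p.2 * x) | p in T] = [set p | (p.1 / x, p.2 / x) \in T].
Proof.
move=> xU; apply/setP=> p; rewrite (@can_imset_pre _ _ (fun p => (p.1 / x, p.2 / x))) //.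
by move=> [c d] /=; rewrite !mulrK.
Qed.

Lemma Cprime_units2 : Cprime_rel K units2.
Proof.
split=> [|x]; last first.
  rewrite mem_unitsR => xU; rewrite imset_mulr_pair //.
  by apply/setP=> -[c d]; rewrite !inE /= !unitrMl // unitrV.
exists [set B | `[< CuU_basis K B >]] => [B|]; first by rewrite inE => /asboolP.
apply/setP=> p; apply/idP/bigcupP => [pU|[B]]; last first.
  by rewrite inE => /asboolP/CuU_basis_sub/subsetP; apply.
have [S1 basisS1 pS1] := @basis_of_exists _ (Cu_rel K) _ p
  (fun B T relB relT _ => gen_rel_setD relB relT) (@gen_rel_setT _ _ _) (in_setT p).
exists (S1 :&: units2); last by rewrite inE pS1.
rewrite inE; apply/asboolP; exists S1 => //; split=> //.
by apply/set0Pn; exists p; rewrite inE pS1.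
Qed.

Lemma Cprime_setD B T :
  Cprime_rel K B -> Cprime_rel K T -> T \subset B -> Cprime_rel K (B :\: T).
Proof.
move=> [[QB basisQB ->] invB] [[QT basisQT ->] invT] _; split.
  exists (QB :\: QT) => [C /setDP[/basisQB]|] //.
  apply/setP=> p; rewrite inE; apply/andP/bigcupP => [[pNT /bigcupP[C CQB pC]]|].
    exists C => //; rewrite inE CQB andbT; apply: contra pNT => CQT.
    by apply/bigcupP; exists C.
  case=> C /setDP[CQB CNQT] pC; split; last by apply/bigcupP; exists C.
  apply/bigcupP=> -[C' C'QT pC']; case/negP: CNQT.
  by rewrite (CuU_basis_eq (basisQB _ CQB) (basisQT _ C'QT) pC pC').
move=> x xU; have := invB x xU; have := invT x xU; rewrite mem_unitsR in xU.
rewrite !imset_mulr_pair // => /setP eqT /setP eqB.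
by apply/setP=> p; move: (eqT p) (eqB p); rewrite !inE => <- <-.
Qed.

Lemma is_rel_Cprime S T : is_scheme S -> (forall T', Cu_rel K T' -> is_rel S T') ->
  Cprime_rel K T -> is_rel S T.
Proof.
move=> schemeS relCu [[Q basisQ ->] _]; apply: is_rel_cover => // B /basisQ.
case=> S1 [relS1 _ _] [-> _].
by apply: is_rel_setI => //; apply: relCu; [apply: relS1 | apply: Cu_rel_units2].
Qed.

Definition mul_graph x : {set R * R} := [set (g, x * g) | g in unitsR R].

Lemma mem_mul_graph1 x b : ((1, b) \in mul_graph x) = (b == x).
Proof.
apply/imsetP/eqP => [[g _ [<- ->]]|->]; first by rewrite mulr1.
by exists 1; rewrite ?mulr1 ?mem_unitsR ?unitr1.
Qed.

Lemma is_rel_mul_graph S x : is_scheme S -> (forall T, Cu_rel K T -> is_rel S T) ->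
  mult_sring_trivial K -> x \is a GRing.unit -> is_rel S (mul_graph x).
Proof.
move=> schemeS relCu trivA xU.
have [B basisB x1B] : exists2 B, Defs.basis_of (Cprime_rel K) B & (1, x) \in B.
  apply: basis_of_exists Cprime_setD Cprime_units2 _.
  by rewrite !inE /= unitr1.
have [x' _ Bx'] := trivA B basisB.
have -> : mul_graph x = B.
  by move: x1B; rewrite Bx' -[[set _ | _ in _]]/(mul_graph x') mem_mul_graph1 => /eqP->.
by case: basisB => /(is_rel_Cprime schemeS relCu).
Qed.

Definition swap01 : {perm R} := affine (FinRing.unit R (@unitrN1 R)) 1.

Lemma swap01E x : swap01 x = 1 - x.
Proof. by rewrite affineE mulN1r addrC. Qed.

Lemma swap01V : (swap01^-1 = swap01)%g.
Proof.
by apply/eqP; rewrite eq_invg_mul; apply/eqP/permP=> x; rewrite permM perm1 !swap01E subKr.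
Qed.

Lemma Cu_rel_setact_swap01 S : is_scheme S ->
  (forall T, is_rel (Cyc_basis K) T -> is_rel S T) -> is_rel S [set (1, 1)] ->
  forall T, Cu_rel K T -> is_rel (setact (set_action pair_action) S swap01) T.
Proof.
move=> schemeS relCyc rel11 T; apply; first exact: is_scheme_setact.
  move=> T' /(is_rel_cyc_setact (FinRing.unit R (@unitrN1 R)) 1) /relCyc.
  by move/(is_rel_setact swap01); rewrite -{2}swap01V actK.
move=> _ /set1P->; have -> : [set (0, 0)] = setact pair_action [set (1, 1)] swap01.
  by rewrite setactE imset_set1 pair_actE /= swap01E subrr.
exact: is_rel_setact.
Qed.

Lemma Cuv_trivial : local_ring R -> mult_sring_trivial K ->
  gen_trivial (Cyc_basis K) [set [set (0, 0)]; [set (1, 1)]].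
Proof.
move=> localR trivA T S schemeS relCyc relM.
have rel00 : is_rel S [set (0, 0)] by apply: relM; rewrite !inE eqxx.
have rel11 : is_rel S [set (1, 1)] by apply: relM; rewrite !inE eqxx orbT.
have relCu T' : Cu_rel K T' -> is_rel S T' by move/(_ S schemeS relCyc); apply=> _ /set1P->.
apply: (is_rel_discrete schemeS) => y; have [yU|yNU] := boolP (y \is a GRing.unit).
  apply: (is_rel_set1_transfer schemeS rel11 (is_rel_mul_graph schemeS relCu trivA yU)).
  exact: mem_mul_graph1.
have := is_rel_mul_graph (is_scheme_setact swap01 schemeS)
  (Cu_rel_setact_swap01 schemeS relCyc rel11) trivA (local_ring_subr_unit localR yNU).
rewrite -[mul_graph _](actKV (set_action pair_action) swap01) swap01V is_rel_setactE => relG.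
apply: (is_rel_set1_transfer schemeS rel00 relG) => b.
rewrite mem_setact_pair swap01V pair_actE /= !swap01E subr0 mem_mul_graph1.
exact: (inj_eq (inv_inj (subKr 1))).
Qed.

Lemma Gamma_sub_Aut g : in_Gamma K g -> in_Aut (Cyc_basis K) g.
Proof.
case=> a aK [b gE]; have -> : g = affine a b by apply/permP=> x; rewrite gE affineE.
exact: affine_in_Aut.
Qed.

Lemma Aut_sub_Gamma g : local_ring R -> mult_sring_trivial K ->
  in_Aut (Cyc_basis K) g -> in_Gamma K g.
Proof.
move=> localR trivA autg.
have /imsetP[a aK g10] : g 1 - g 0 \in rK K 1.
  have cyc1 : cyc_rel K 1 \in Cyc_basis K by apply/imsetP; exists 1.
  rewrite -[_ - _]/((g 0, g 1).2 - (g 0, g 1).1) -mem_cyc_rel -(autg _ cyc1).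
  by apply/imsetP; exists (0, 1); rewrite ?mem_cyc_rel /= ?subr0 ?rK_self.
rewrite mul1r in g10; pose f := affine a (g 0).
have autgf : in_Aut (Cyc_basis K) (g * f^-1)%g.
  apply/in_AutP=> B CbB; rewrite groupM ?groupV //; apply: (in_AutP _ _).1 CbB.
    exact: autg.
  exact: affine_in_Aut.
suff fg : (g * f^-1)%g = 1%g.
  have gf : g = f by apply/eqP; rewrite eq_mulgV1 fg.
  by exists a => //; exists (g 0) => x; rewrite -affineE -/f -gf.
apply: (gen_trivial_Aut1 (Cuv_trivial localR trivA) autgf _).
have fixed c : f c = g c ->
    [set ((g * f^-1)%g p.1, (g * f^-1)%g p.2) | p in [set (c, c)]] = [set (c, c)].
  by move=> fgc; rewrite imset_set1 /= permM -fgc permK.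
by move=> _ /set2P[]->; apply: fixed; rewrite affineE ?mulr0 ?add0r // mulr1 -g10 subrK.
Qed.

End CycScheme.

Local Open Scope ring_scope.
Unset Implicit Arguments.

Theorem theorem4p4 (R : finComUnitRingType) (K : {group {unit R}}) :
  local_ring R ->
  mult_sring_trivial K ->
  gen_trivial (Cyc_basis K) [set [set ((0 : R), (0 : R))]; [set ((1 : R), (1 : R))]] /\
  (forall g : {perm R}, in_Aut (Cyc_basis K) g <-> in_Gamma K g).
Proof.
move=> localR trivA; split; first exact: Cuv_trivial.
by move=> g; split; [exact: Aut_sub_Gamma | exact: Gamma_sub_Aut].
Qed.
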